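(* Let $R$ be a nonzero polynomial, $m\ge1$ an integer and $\alpha\in\mathbb{C}$ such that $Q(z)=\frac{R(z)}{(z-\alpha)^m}$ is not a polynomial (i.e. $Q$ has a pole at $\alpha$). Then for every $r>0$, the open disk $\{|z|<r\}$ contains no zeroes of $Q^{(n)}$ for all sufficiently large $n$. *)

From HB Require Import structures.
From mathcomp Require Import all_boot all_order all_algebra.
From mathcomp Require Import complex.
From mathcomp Require Import all_classical all_reals all_analysis.
Set Implicit Arguments. Unset Strict Implicit. Unset Printing Implicit Defensive.
Import Order.TTheory GRing.Theory Num.Theory.
Import numFieldNormedType.Exports.
Local Open Scope ring_scope.
Local Open Scope complex_scope.

(* Q(z) = R(z) / (z - alpha)^m as a function on the complex numbers R[i]
   (junk value at z = alpha; derivatives are only used at z <> alpha). *)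
Definition ratQ (R : realType) (P : {poly R[i]}) (m : nat) (a : R[i])
  : R[i] -> R[i] := fun z => P.[z] / (z - a) ^+ m.

Definition nderiv (K : numFieldType) (n : nat) (f : K -> K) : K -> K :=
  derive1n n f.

From HB Require Import structures.
From mathcomp Require Import all_boot all_order all_algebra.
From mathcomp Require Import complex.
From mathcomp Require Import all_classical all_reals all_analysis.
From mathcomp Require Import ring zify.
Set Implicit Arguments.
Unset Strict Implicit.
Unset Printing Implicit Defensive.
Import Order.TTheory GRing.Theory Num.Theory.
Import numFieldNormedType.Exports.
Local Open Scope ring_scope.
Local Open Scope complex_scope.

(* With w = z - a and T(w) = P(z), Q(z) = sum_i T_i w^(i-m), so termwise
   differentiation gives
     Q^(n)(z) = w^-(m+n) sum_i T_i (i-m)(i-m-1)...(i-m-n+1) w^i.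
   The terms with i >= m vanish once n > deg T, and since Q has a genuine pole
   some T_i with i < m is nonzero; let i0 be the least such index.  For
   i0 < i < m the falling factorials satisfy |(i-m)_n| <= (m/n) |(i0-m)_n|,
   so on the bounded set |w| <= 1 + r + |a| the i0-th term dominates the
   whole sum as soon as n is large, and Q^(n) cannot vanish there. *)

Definition rising (k n : nat) : nat := \prod_(j < n) (k + j).

Lemma rising_gt0 k n : (0 < k)%N -> (0 < rising k n)%N.
Proof. by move=> k_gt0; rewrite prodn_gt0 // => j; rewrite addn_gt0 k_gt0. Qed.

Lemma rising_mulr k n : (rising k n * (k + n) = k * rising k.+1 n)%N.
Proof.
elim: n => [|n IHn]; first by rewrite /rising !big_ord0 addn0 muln1 mul1n.
rewrite /rising !big_ord_recr /= -/(rising k n) -/(rising k.+1 n) IHn.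
by rewrite -mulnA addnS addSn.
Qed.

Lemma leq_rising k k' n : (k <= k')%N -> (rising k n <= rising k' n)%N.
Proof. by move=> le_kk'; apply: leq_prod => j _; rewrite leq_add2r. Qed.

Lemma leq_mul_rising k k' n :
  (0 < k < k')%N -> (n * rising k n <= k' * rising k' n)%N.
Proof.
case/andP=> k_gt0 lt_kk'.
apply: leq_trans (_ : rising k n * (k + n) <= _)%N.
  by rewrite mulnC leq_mul2l leq_addl orbT.
by rewrite rising_mulr leq_mul ?leq_rising // ltnW.
Qed.

Section FallingFactorial.
Variable R : comRingType.

Definition ffactr (x : R) (n : nat) : R := \prod_(j < n) (x - j%:R).

Lemma ffactrSr x n : ffactr x n.+1 = ffactr x n * (x - n%:R).
Proof. by rewrite /ffactr big_ord_recr. Qed.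

Lemma ffactr_small k n : (k < n)%N -> ffactr k%:R n = 0.
Proof.
by move=> lt_kn; rewrite /ffactr (bigD1 (Ordinal lt_kn)) //= subrr mul0r.
Qed.

Lemma ffactrN k n : ffactr (- k%:R) n = (-1) ^+ n * (rising k n)%:R.
Proof.
rewrite /ffactr /rising natr_prod -[n in (-1) ^+ n]card_ord -prodr_const.
by rewrite -big_split; apply: eq_bigr => j _ /=; rewrite natrD; ring.
Qed.

Definition pole_numer (T : {poly R}) (m n : nat) (w : R) : R :=
  \sum_(i < size T) T`_i * ffactr (i%:R - m%:R) n * w ^+ i.

End FallingFactorial.

Lemma normr_ffactrN (C : numDomainType) k n :
  `|ffactr (- k%:R : C) n| = (rising k n)%:R.
Proof. by rewrite ffactrN normrM normrX normrN1 expr1n mul1r normr_nat. Qed.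

Lemma ler_normr_ffactrN (C : numDomainType) k k' n : (0 < k < k')%N ->
  n%:R * `|ffactr (- k%:R : C) n| <= k'%:R * `|ffactr (- k'%:R : C) n|.
Proof.
by move=> lt_kk'; rewrite !normr_ffactrN -!natrM ler_nat leq_mul_rising.
Qed.

Lemma derive1n_eq_on_open (K : numFieldType) (D : set K) (f : K -> K)
    (g : nat -> K -> K) :
  open D -> (forall z, D z -> f z = g 0%N z) ->
  (forall n z, D z -> is_derive z 1 (g n) (g n.+1 z)) ->
  forall n z, D z -> derive1n n f z = g n z.
Proof.
move=> oD fg dg; elim=> [|n IHn] z Dz; first exact: fg.
have nearD : \forall w \near z, D w by exact: oD.
rewrite derive1nS derive1E (near_eq_derive _ (filterS IHn nearD)).
by have [] := dg n z Dz.
Qed.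

Section PoleDerivatives.
Variables (K : numFieldType) (a : K).

Definition pole_quot (i k : nat) (z : K) : K := (z - a) ^+ i / (z - a) ^+ k.

Lemma is_derive_pole_quot i k z : z != a ->
  is_derive z 1 (pole_quot i k) ((i%:R - k%:R) * pole_quot i k.+1 z).
Proof.
move=> za; have za0 : z - a != 0 by rewrite subr_eq0.
have d_shift : is_derive z (1 : K) (shift (- a)) 1 := is_derive_shift _ _ _.
have d_inv : is_derive z (1 : K) (fun y => ((shift (- a) ^+ k) y)^-1)
    (- ((z - a) ^+ k) ^- 2 *: ((k%:R * (z - a) ^+ k.-1) *: 1)).
  have wk0 : (shift (- a) ^+ k) z != 0 by rewrite exprfctE expf_neq0.
  have [wk_derivable <-] := is_deriveX k d_shift.
  by apply: DeriveDef; [exact: derivableV | rewrite deriveV // exprfctE].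
have -> : pole_quot i k =
    shift (- a) ^+ i * (fun y => ((shift (- a) ^+ k) y)^-1).
  by apply/funext => y; rewrite /pole_quot /= !exprfctE.
apply: is_derive_eq (is_deriveM (is_deriveX i d_shift) d_inv) _.
rewrite /= !exprfctE /pole_quot /GRing.scale /= !mulr1.
have exprpredE n : n%:R * (z - a) ^+ n.-1 = n%:R * (z - a) ^+ n / (z - a).
  by case: n => [|n]; rewrite ?mul0r // exprSr mulrA mulfK.
rewrite !exprpredE.
have quotient_rule (w : K) : w != 0 ->
    w ^+ i * (- (w ^+ k) ^- 2 * (k%:R * w ^+ k / w)) +
    (w ^+ k)^-1 * (i%:R * w ^+ i / w) =
    (i%:R - k%:R) * (w ^+ i / w ^+ k.+1).
  by move=> w0; rewrite (exprSr w k); field; rewrite w0 expf_neq0.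
exact: quotient_rule.
Qed.

Definition pole_deriv (T : {poly K}) (m n : nat) (z : K) : K :=
  pole_numer T m n (z - a) / (z - a) ^+ (m + n).

Lemma pole_derivE T m n z : pole_deriv T m n z =
  \sum_(i < size T) T`_i * ffactr (i%:R - m%:R) n * pole_quot i (m + n) z.
Proof.
by rewrite /pole_deriv mulr_suml; apply: eq_bigr => i _; rewrite mulrA.
Qed.

Lemma is_derive_pole_deriv T m n z : z != a ->
  is_derive z 1 (pole_deriv T m n) (pole_deriv T m n.+1 z).
Proof.
move=> za; have -> : pole_deriv T m n = \sum_(i < size T)
    (T`_i * ffactr (i%:R - m%:R) n) \*: pole_quot i (m + n).
  by apply/funext => y; rewrite pole_derivE fct_sumE.
apply: is_derive_eq.
  apply: is_derive_sum => i.
  by apply: is_deriveZ; exact: is_derive_pole_quot.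
rewrite pole_derivE; apply: eq_bigr => i _.
by rewrite ffactrSr addnS natrD /GRing.scale /= !mulrA opprD addrA.
Qed.

Lemma open_setC1 : open [set~ a]%classic.
Proof.
rewrite openC.
exact/accessible_closed_set1/hausdorff_accessible/norm_hausdorff.
Qed.

Lemma derive1n_pole T m n z : z != a ->
  derive1n n (fun y => T.[y - a] / (y - a) ^+ m) z = pole_deriv T m n z.
Proof.
move=> /eqP za.
apply: (derive1n_eq_on_open open_setC1) => // [y _ | k y /eqP]; last first.
  exact: is_derive_pole_deriv.
rewrite /pole_deriv addn0 /pole_numer horner_coef; congr (_ / _).
by apply: eq_bigr => i _; rewrite /ffactr big_ord0 mulr1.
Qed.

End PoleDerivatives.

Lemma sum_neq0_dominant (C : numDomainType) (I : finType) (F : I -> C)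
    (i0 : I) :
  \sum_(i | i != i0) `|F i| < `|F i0| -> \sum_i F i != 0.
Proof.
move=> dom; rewrite (bigD1 i0) //=; apply: contraTneq dom => /eqP.
rewrite addr_eq0 => /eqP ->; rewrite normrN; apply/negP.
by move=> /lt_le_trans/(_ (ler_norm_sum _ _ _)); rewrite ltxx.
Qed.

Section PoleNumerator.
Variables (C : numDomainType) (T : {poly C}) (m i0 : nat).
Hypotheses (lt_i0m : (i0 < m)%N) (Ti0_neq0 : T`_i0 != 0)
  (T_below_i0 : forall i, (i < i0)%N -> T`_i = 0).

Let subnatrE j : (j <= m)%N -> j%:R - m%:R = - (m - j)%:R :> C.
Proof. by move=> le_jm; rewrite natrB // opprB. Qed.

Lemma ffactr_subnatr_small n i : (m <= i)%N -> (i - m < n)%N ->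
  ffactr (i%:R - m%:R : C) n = 0.
Proof. by move=> le_mi lt_in; rewrite -natrB // ffactr_small. Qed.

Lemma ler_ffactr_subnatr n i : (i0 < i < m)%N ->
  n%:R * `|ffactr (i%:R - m%:R : C) n|
    <= m%:R * `|ffactr (i0%:R - m%:R : C) n|.
Proof.
case/andP=> lt_i0i lt_im.
rewrite (subnatrE (ltnW lt_im)) (subnatrE (ltnW lt_i0m)).
apply: le_trans (ler_normr_ffactrN _ _ (_ : 0 < m - i < m - i0)%N) _; first lia.
by rewrite ler_wpM2r // ler_nat leq_subr.
Qed.

Lemma pole_numer_term_le n (w B : C) (i : nat) :
  (size T <= n)%N -> `|w| <= B -> 1 <= B -> (i < size T)%N -> i != i0 ->
  n%:R * `|T`_i * ffactr (i%:R - m%:R) n * w ^+ i|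
    <= m%:R * B ^+ size T * `|T`_i|
       * (`|ffactr (i0%:R - m%:R) n| * `|w| ^+ i0).
Proof.
move=> le_Tn wB B1 iT ii0; have B_ge0 : 0 <= B := le_trans ler01 B1.
have [lt_ii0 | le_i0i] := ltnP i i0.
  by rewrite T_below_i0 // !(mul0r, normr0, mulr0).
have [lt_im | le_mi] := ltnP i m; last first.
  rewrite ffactr_subnatr_small //; last first.
    by apply: leq_ltn_trans (leq_subr _ _) (leq_trans iT le_Tn).
  by rewrite mulr0 mul0r normr0 mulr0 !mulr_ge0 ?exprn_ge0.
have lt_i0i : (i0 < i)%N by rewrite ltn_neqAle eq_sym ii0.
have w_pow : `|w| ^+ i <= `|w| ^+ i0 * B ^+ size T.
  rewrite -(subnKC le_i0i) exprD ler_wpM2l ?exprn_ge0 //.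
  apply: le_trans (_ : B ^+ (i - i0) <= _); first by rewrite lerXn2r.
  by apply: ler_weXn2l => //; apply: leq_trans (leq_subr _ _) (ltnW iT).
have bound (c c0 : C) : 0 <= c -> n%:R * c <= m%:R * c0 ->
    n%:R * (`|T`_i| * c * `|w| ^+ i)
      <= m%:R * B ^+ size T * `|T`_i| * (c0 * `|w| ^+ i0).
  move=> c_ge0 c_le.
  rewrite [leLHS](_ : _ = `|T`_i| * (n%:R * c * `|w| ^+ i)); last by ring.
  rewrite [leRHS](_ : _ = `|T`_i| * (m%:R * c0 * (`|w| ^+ i0 * B ^+ size T))).
    by rewrite ler_wpM2l //; apply: ler_pM; rewrite ?mulr_ge0 ?exprn_ge0.
  by ring.
rewrite !normrM normrX; apply: bound => //.
by rewrite ler_ffactr_subnatr ?lt_i0i.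
Qed.

Lemma pole_numer_neq0 n (w B : C) :
  (size T <= n)%N -> w != 0 -> `|w| <= B -> 1 <= B ->
  m%:R * B ^+ size T * \sum_(i < size T) `|T`_i| < n%:R * `|T`_i0| ->
  pole_numer T m n w != 0.
Proof.
move=> le_Tn w0 wB B1 large.
have i0T : (i0 < size T)%N.
  by rewrite ltnNge; apply: contra Ti0_neq0 => /(nth_default 0) ->.
have n_gt0 : (0 < n)%N := leq_trans (leq_ltn_trans (leq0n i0) i0T) le_Tn.
set D : C := `|ffactr (i0%:R - m%:R : C) n| * `|w| ^+ i0.
have D_gt0 : 0 < D.
  rewrite mulr_gt0 ?exprn_gt0 ?normr_gt0 // subnatrE ?(ltnW lt_i0m) //.
  by rewrite -normr_gt0 normr_ffactrN ltr0n rising_gt0 // subn_gt0.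
apply: (sum_neq0_dominant (i0 := Ordinal i0T)).
rewrite -(@ltr_pM2l _ n%:R) ?ltr0n // mulr_sumr.
have term_le (i : 'I_(size T)) : i != Ordinal i0T -> _ :=
  pole_numer_term_le le_Tn wB B1 (ltn_ord i).
apply: le_lt_trans (ler_sum _ term_le) _; rewrite -mulr_suml -mulr_sumr -/D.
set K := m%:R * B ^+ size T.
apply: (le_lt_trans (y := K * (\sum_(i < size T) `|T`_i|) * D)).
  have K_ge0 : 0 <= K by rewrite mulr_ge0 ?exprn_ge0 ?(le_trans ler01 B1).
  rewrite ler_pM2r // ler_wpM2l //.
  by rewrite [leRHS](bigD1 (Ordinal i0T)) //= lerDr.
rewrite [ltRHS](_ : _ = n%:R * `|T`_i0| * D).
  by rewrite ltr_pM2r.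
by rewrite /D !normrM normrX !mulrA.
Qed.

End PoleNumerator.

Lemma pole_removable (K : fieldType) (T : {poly K}) (m : nat) (a : K) :
  (forall i, (i < m)%N -> T`_i = 0) ->
  exists p : {poly K}, forall z, z != a -> T.[z - a] / (z - a) ^+ m = p.[z].
Proof.
move=> T_low; exists (drop_poly m T \Po ('X - a%:P)) => z za.
have take0 : take_poly m T = 0.
  by apply/polyP => i; rewrite coef_take_poly coef0; case: ifP => // /T_low.
rewrite -{1}(poly_take_drop m T) take0 add0r hornerM hornerXn.
by rewrite horner_comp hornerXsubC mulfK // expf_neq0 // subr_eq0.
Qed.

Lemma nonremovable_pole_coef (K : fieldType) (T : {poly K}) (m : nat) (a : K) :
  ~ (exists p : {poly K},
       forall z, z != a -> T.[z - a] / (z - a) ^+ m = p.[z]) ->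
  exists i0, [/\ (i0 < m)%N, T`_i0 != 0 & forall i, (i < i0)%N -> T`_i = 0].
Proof.
move=> not_removable.
have [i lt_im Ti] : exists2 i, (i < m)%N & T`_i != 0.
  apply: contrapT => T_low; apply/not_removable/pole_removable => i lt_im.
  by apply/eqP/negPn/negP => Ti; apply: T_low; exists i.
have ex_i : exists j, (j < m)%N && (T`_j != 0) by exists i; rewrite lt_im.
case: (ex_minnP ex_i) => i0 /andP[lt_i0m Ti0] i0_min.
exists i0; split=> // j lt_ji0; apply/eqP/negPn/negP => Tj.
move: (i0_min j); rewrite Tj (ltn_trans lt_ji0 lt_i0m) leqNgt lt_ji0.
by move/(_ isT).
Qed.

Lemma ratQE (R : realType) (P : {poly R[i]}) (m : nat) (a : R[i]) :
  ratQ P m a = fun z => (P \Po ('X + a%:P)).[z - a] / (z - a) ^+ m.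
Proof.
by apply/funext => z; rewrite /ratQ horner_comp hornerD hornerX hornerC subrK.
Qed.

Lemma exists_natr_gt (R : realType) (x : R[i]) :
  0 <= x -> exists n : nat, x < n%:R.
Proof.
move=> x_ge0; have x_real : x \is Num.real by apply: ger0_real.
rewrite -(RRe_real x_real) ler0c in x_ge0 *.
exists (Num.bound (complex.Re x)).
by rewrite -(rmorph_nat (real_complex R)) ltcR archi_boundP.
Qed.

Theorem lemma4p8 (R : realType) (P : {poly R[i]}) (m : nat) (a : R[i]) :
  P != 0 -> (1 <= m)%N ->
  ~ (exists p : {poly R[i]}, forall z : R[i], z != a -> ratQ P m a z = p.[z]) ->
  forall r : R, 0 < r ->
  exists N : nat, forall n : nat, (N <= n)%N ->
    forall z : R[i], `|z| < r%:C -> z != a ->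
      nderiv n (ratQ P m a) z != 0.
Proof.
(* [P != 0] and [1 <= m] are implied by the pole hypothesis. *)
move=> _ _ not_poly r r_gt0; rewrite ratQE in not_poly *.
set T := P \Po ('X + a%:P) in not_poly *.
have [i0 [lt_i0m Ti0 T_below]] := nonremovable_pole_coef not_poly.
set B : R[i] := 1 + (r%:C + `|a|).
have B_ge1 : 1 <= B by rewrite lerDl addr_ge0 // ler0c ltW.
pose K := m%:R * B ^+ size T * \sum_(i < size T) `|T`_i|.
have K_ge0 : 0 <= K.
  by rewrite !mulr_ge0 ?sumr_ge0 ?exprn_ge0 // (le_trans ler01 B_ge1).
have Ti0_gt0 : 0 < `|T`_i0| by rewrite normr_gt0.
have [N0] := exists_natr_gt (divr_ge0 K_ge0 (ltW Ti0_gt0)).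
rewrite ltr_pdivrMr // => N0_gt.
exists (N0 + size T)%N => n le_n z z_lt za.
have za0 : z - a != 0 by rewrite subr_eq0.
rewrite /nderiv derive1n_pole // /pole_deriv mulf_neq0 ?invr_eq0 ?expf_neq0 //.
apply: (pole_numer_neq0 lt_i0m Ti0 T_below (B := B)) => //.
- exact: leq_trans (leq_addl _ _) le_n.
- apply: le_trans (ler_normB _ _) _.
  by rewrite /B [1 + _]addrC -[leLHS]addr0 lerD // lerD2r ltW.
- apply: lt_le_trans N0_gt _; rewrite ler_pM2r // ler_nat.
  exact: leq_trans (leq_addr _ _) le_n.
Qed.
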